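(* Let $\mathcal{P}\subseteq[0,1]^n$ be a polytope with vertex set $V$. For each $v\in V$ let $P_v$ be a non-zero Bernstein polynomial in $n$ variables, and suppose that $$\sum_{v\in V}P_v(x)(v-x)=0\quad\text{for all }x\in\mathcal{P}.$$ Then the Bernoulli race over the Bernstein polynomials $\{P_v\}_{v\in V}$ is a Bernoulli factory for $\mathcal{P}$. If moreover $\sum_{v\in V}P_v(x)>0$ for all $x\in\mathcal{P}$, then it is a strong Bernoulli factory for $\mathcal{P}$.
   Context: A Bernstein monomial is $\prod_{i=1}^n x_i^{a_i}(1-x_i)^{b_i}$ with nonnegative integers $a_i,b_i$; a Bernstein polynomial is a finite combination $\sum_j c_jM_j(x)$ of Bernstein monomials with positive coefficients $c_j$. A Bernoulli factory with output set $V$ (for inputs $x\in[0,1]^n$) is a (possibly infinite) rooted binary tree whose internal nodes are labeled by an index $i\in[n]$ or a known constant $c\in(0,1)$ and whose leaves are labeled by elements of $V$; on input $x$ one walks from the root, at a node labeled $i$ flipping a fresh independent coin that is $1$ with probability $x_i$ (an $x_i$-coin), at a node labeled $c$ a fresh coin of bias $c$, following the edge labeled by the outcome, and outputs the label of the leaf reached; $\mathcal{F}(x)$ is the output ($\emptyset$ if no leaf is reached). Vertices are viewed as vectors in $\mathbb{R}^n$. A Bernoulli factory for $\mathcal{P}$ is such a factory with output set $V$ that terminates almost surely (i.e. $\Pr[\mathcal{F}(x)=\emptyset]=0$) and satisfies $\mathbb{E}[\mathcal{F}(x)]=x$ for all $x\in\mathcal{P}\cap(0,1)^n$; it is a strong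 Bernoulli factory for $\mathcal{P}$ if it terminates almost surely and satisfies $\mathbb{E}[\mathcal{F}(x)]=x$ for all $x\in\mathcal{P}$. The Bernoulli race over Bernstein polynomials $\{P_v\}_{v\in V}$ is the following factory: fix a constant $C\ge1$ at least the sum of the coefficients of every $P_v$. In each round, pick $v\in V$ uniformly at random; writing $P_v=\sum_j c_jM_j$, select monomial $M_j$ with probability $c_j/C$ (with the remaining probability select none, which counts as failure); if $M_j=\prod_i x_i^{a_i}(1-x_i)^{b_i}$ is selected, flip the $x_i$-coin $a_i+b_i$ times for each $i$, and declare success iff for every $i$ the first $a_i$ flips are $1$ and the next $b_i$ flips are $0$. On success output $v$; otherwise start a new round. *)

From HB Require Import structures.
From mathcomp Require Import all_boot all_order all_algebra.
From mathcomp Require Import all_classical all_reals all_analysis.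
Set Implicit Arguments. Unset Strict Implicit. Unset Printing Implicit Defensive.
Import Order.TTheory GRing.Theory Num.Theory.
Import numFieldNormedType.Exports.
Local Open Scope ring_scope.

(* Points of R^n are row vectors 'rV[R]_n;
   the i-th coordinate of x is x ord0 i. *)

Section Bernstein.
Variables (R : realType) (n : nat).

(* A Bernstein monomial prod_i x_i^(a_i) (1-x_i)^(b_i), given by (a, b). *)
Definition bmono := ({ffun 'I_n -> nat} * {ffun 'I_n -> nat})%type.

Definition bmono_eval (m : bmono) (x : 'rV[R]_n) : R :=
  \prod_(i < n) (x ord0 i ^+ m.1 i * (1 - x ord0 i) ^+ m.2 i).

Definition bpoly := seq (R * bmono).

Definition is_bernstein (P : bpoly) : Prop := forall t, t \in P -> 0 < t.1.

Definition bpoly_eval (P : bpoly) (x : 'rV[R]_n) : R :=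
  \sum_(t <- P) t.1 * bmono_eval t.2 x.

Definition bpoly_nonzero (P : bpoly) : Prop :=
  exists x : 'rV[R]_n, bpoly_eval P x != 0.

Definition bcoef_sum (P : bpoly) : R := \sum_(t <- P) t.1.

Definition in_hull (V : seq 'rV[R]_n) (x : 'rV[R]_n) : Prop :=
  exists w : 'I_(size V) -> R,
    (forall i, 0 <= w i) /\ \sum_(i < size V) w i = 1 /\
    x = \sum_(i < size V) w i *: V`_i.

(* V is the vertex set of the polytope conv(V): duplicate free, and no
   element of V lies in the convex hull of the other elements. *)
Definition is_vertex_set (V : seq 'rV[R]_n) : Prop :=
  uniq V /\ forall v, v \in V -> ~ in_hull (rem v V) v.

Definition in_unit_cube (x : 'rV[R]_n) : Prop := forall i, 0 <= x ord0 i <= 1.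
Definition in_open_cube (x : 'rV[R]_n) : Prop := forall i, 0 < x ord0 i < 1.

(* Probability that a single round succeeds and outputs v:
   v is picked with probability 1/|V|, monomial M_j of P_v with probability
   c_j/C, and the coin test for M_j = prod x_i^a_i (1-x_i)^b_i succeeds with
   probability prod_i x_i^a_i (1-x_i)^b_i (independent fresh coin flips). *)
Definition race_round (V : seq 'rV[R]_n) (Pv : 'rV[R]_n -> bpoly) (C : R)
    (x v : 'rV[R]_n) : R :=
  (size V)%:R^-1 * \sum_(t <- Pv v) (t.1 / C) * bmono_eval t.2 x.

Definition race_fail (V : seq 'rV[R]_n) (Pv : 'rV[R]_n -> bpoly) (C : R)
    (x : 'rV[R]_n) : R :=
  1 - \sum_(v <- V) race_round V Pv C x v.

(* Pr[F(x) = v]: the first k rounds fail and round k+1 outputs v, summed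
   over k >= 0 (rounds are independent). *)
Definition race_out (V : seq 'rV[R]_n) (Pv : 'rV[R]_n -> bpoly) (C : R)
    (x v : 'rV[R]_n) : R :=
  limn (fun N : nat =>
    \sum_(k < N) (race_fail V Pv C x ^+ k * race_round V Pv C x v)).

(* Pr[F(x) = emptyset]: the limit of Pr[the first k rounds all fail]. *)
Definition race_noout (V : seq 'rV[R]_n) (Pv : 'rV[R]_n -> bpoly) (C : R)
    (x : 'rV[R]_n) : R :=
  limn (fun k : nat => race_fail V Pv C x ^+ k).

(* out x v = Pr[F(x) = v], noout x = Pr[F(x) = emptyset]. *)

(* Bernoulli factory for conv(V): terminates a.s. and E[F(x)] = x for all
   x in P ∩ (0,1)^n. *)
Definition is_bernoulli_factory (V : seq 'rV[R]_n)
    (out : 'rV[R]_n -> 'rV[R]_n -> R) (noout : 'rV[R]_n -> R) : Prop :=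
  forall x, in_hull V x -> in_open_cube x ->
    noout x = 0 /\ \sum_(v <- V) out x v *: v = x.

Definition is_strong_bernoulli_factory (V : seq 'rV[R]_n)
    (out : 'rV[R]_n -> 'rV[R]_n -> R) (noout : 'rV[R]_n -> R) : Prop :=
  forall x, in_hull V x ->
    noout x = 0 /\ \sum_(v <- V) out x v *: v = x.

End Bernstein.

From HB Require Import structures.
From mathcomp Require Import all_boot all_order all_algebra.
From mathcomp Require Import all_classical all_reals all_analysis.
From mathcomp Require Import ring lra.
Set Implicit Arguments. Unset Strict Implicit. Unset Printing Implicit Defensive.
Import Order.TTheory GRing.Theory Num.Theory.
Import numFieldNormedType.Exports.
Local Open Scope ring_scope.

(* A round of the race outputs v with probability P_v(x) / (|V| C), so by the
   geometric series the race stops almost surely and outputs v with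
   probability P_v(x) / S(x), where S(x) = sum_v P_v(x), as soon as S(x) > 0.
   The balance identity sum_v P_v(x) (v - x) = 0 says precisely that this
   output law has mean x.  On the open cube every monomial is positive, so a
   nonzero Bernstein polynomial is positive there and S(x) > 0 automatically. *)

Section Geometric.
Variable R : realType.

Let norm_1B_lt1 (q : R) : 0 < q <= 1 -> `|1 - q| < 1.
Proof. by case/andP=> q0 q1; rewrite ger0_norm ?subr_ge0 // ltrBlDr ltrDl. Qed.

Lemma lim_geometric_fail (q : R) : 0 < q <= 1 -> limn (fun k => (1 - q) ^+ k) = 0.
Proof. by move=> q01; apply: cvg_lim => //; apply/cvg_expr/norm_1B_lt1. Qed.

Lemma lim_geometric_success (q r : R) : 0 < q <= 1 ->
  limn (fun N => \sum_(k < N) (1 - q) ^+ k * r) = r / q.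
Proof.
move=> q01.
have -> : (fun N => \sum_(k < N) (1 - q) ^+ k * r) = series (geometric r (1 - q)).
  apply: funext => N; rewrite /series /= big_mkord.
  by apply: eq_bigr => k _; rewrite mulrC.
rewrite (cvg_lim _ (cvg_geometric_series (norm_1B_lt1 q01))) //.
by rewrite opprB addrC subrK.
Qed.

End Geometric.

Lemma sumr_seq_gt0 (R : numDomainType) (I : eqType) (s : seq I) (F : I -> R) :
  s != [::] -> (forall i, i \in s -> 0 < F i) -> 0 < \sum_(i <- s) F i.
Proof.
case: s => // i s _ F_gt0; rewrite big_cons ltr_pwDl ?F_gt0 ?mem_head //.
rewrite big_seq sumr_ge0 // => j js.
by rewrite ltW // F_gt0 // mem_behead.
Qed.

Lemma sumr_seq_le_const (R : numDomainType) (I : eqType) (s : seq I)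
    (F : I -> R) (C : R) :
  (forall i, i \in s -> F i <= C) -> \sum_(i <- s) F i <= (size s)%:R * C.
Proof.
move=> F_le; rewrite mulr_natl -iter_addr_0 -count_predT -big_const_seq.
by rewrite big_seq [leRHS]big_seq; apply: ler_sum.
Qed.

Section BernsteinBounds.
Variables (R : realType) (n : nat).
Implicit Types (x : 'rV[R]_n) (m : bmono n) (P : bpoly R n).

Lemma bmono_eval_le1 m x : in_unit_cube x -> bmono_eval m x <= 1.
Proof.
move=> x01; apply: prodr_ile1 => i _; have /andP[x0 x1] := x01 i.
have [y0 y1] : 0 <= 1 - x ord0 i /\ 1 - x ord0 i <= 1 by split; lra.
by rewrite mulr_ge0 ?exprn_ge0 ?mulr_ile1 ?exprn_ge0 ?exprn_ile1.
Qed.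

Lemma bmono_eval_gt0 m x : in_open_cube x -> 0 < bmono_eval m x.
Proof.
move=> x01; apply: prodr_gt0 => i _; have /andP[x0 x1] := x01 i.
by rewrite mulr_gt0 // exprn_gt0 // subr_gt0.
Qed.

Lemma bpoly_eval_le_coef_sum P x : is_bernstein P -> in_unit_cube x ->
  bpoly_eval P x <= bcoef_sum P.
Proof.
move=> P_pos x01; rewrite /bpoly_eval /bcoef_sum !big_seq; apply: ler_sum => t tP.
by rewrite ler_piMr ?bmono_eval_le1 ?ltW ?P_pos.
Qed.

Lemma bpoly_eval_gt0 P x : is_bernstein P -> bpoly_nonzero P -> in_open_cube x ->
  0 < bpoly_eval P x.
Proof.
move=> P_pos [y Py] x01; rewrite /bpoly_eval sumr_seq_gt0 // => [|t tP].
  by apply: contra_neq Py => ->; rewrite /bpoly_eval big_nil.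
by rewrite mulr_gt0 ?P_pos ?bmono_eval_gt0.
Qed.

Lemma in_hull_unit_cube (V : seq 'rV[R]_n) x :
  (forall v, v \in V -> in_unit_cube v) -> in_hull V x -> in_unit_cube x.
Proof.
move=> V01 [w [w_ge0 [w_sum1 ->]]] i; have Vj01 j := V01 _ (mem_nth 0 (ltn_ord j)) i.
rewrite summxE; apply/andP; split.
  by apply: sumr_ge0 => j _; rewrite mxE mulr_ge0 //; case/andP: (Vj01 j).
rewrite -w_sum1; apply: ler_sum => j _.
by rewrite mxE ler_piMr //; case/andP: (Vj01 j).
Qed.

Lemma in_hull_neq_nil (V : seq 'rV[R]_n) x : in_hull V x -> V != [::].
Proof.
by case: V => // -[w [_ [+ _]]]; rewrite big_ord0 => /esym/eqP; rewrite oner_eq0.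
Qed.

End BernsteinBounds.

Section BernoulliRace.
Variables (R : realType) (n : nat) (V : seq 'rV[R]_n) (Pv : 'rV[R]_n -> bpoly R n)
  (C : R).
Implicit Type x : 'rV[R]_n.

Let S x := \sum_(v <- V) bpoly_eval (Pv v) x.
Let K := (size V)%:R * C.

Lemma race_roundE x v : race_round V Pv C x v = bpoly_eval (Pv v) x / K.
Proof.
rewrite /race_round /bpoly_eval /K invfM mulr_sumr mulr_suml.
by apply: eq_bigr => t _; ring.
Qed.

Lemma race_failE x : race_fail V Pv C x = 1 - S x / K.
Proof. by rewrite /race_fail (eq_bigr _ (fun v _ => race_roundE x v)) -mulr_suml. Qed.

Lemma race_mass_le x :
  (forall v, v \in V -> is_bernstein (Pv v)) ->
  (forall v, v \in V -> bcoef_sum (Pv v) <= C) -> in_unit_cube x -> S x <= K.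
Proof.
move=> P_pos P_le x01; apply: sumr_seq_le_const => v vV.
exact: le_trans (bpoly_eval_le_coef_sum (P_pos v vV) x01) (P_le v vV).
Qed.

Section PositiveMass.
Variable x : 'rV[R]_n.
Hypotheses (S_gt0 : 0 < S x) (S_le : S x <= K).

Let K_gt0 : 0 < K. Proof. exact: lt_le_trans S_le. Qed.

Let success_prob : 0 < S x / K <= 1.
Proof. by rewrite divr_gt0 // ler_pdivrMr // mul1r. Qed.

Lemma race_nooutE : race_noout V Pv C x = 0.
Proof. by rewrite /race_noout race_failE lim_geometric_fail. Qed.

Lemma race_outE v : race_out V Pv C x v = bpoly_eval (Pv v) x / S x.
Proof.
rewrite /race_out race_failE race_roundE lim_geometric_success //.
by field; rewrite !gt_eqF.
Qed.

Lemma race_out_mean :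
  \sum_(v <- V) bpoly_eval (Pv v) x *: (v - x) = 0 ->
  \sum_(v <- V) race_out V Pv C x v *: v = x.
Proof.
rewrite (eq_bigr _ (fun v _ => scalerBr _ v x)) sumrB -scaler_suml.
move=> /subr0_eq balance; under eq_bigr do rewrite race_outE mulrC -scalerA.
by rewrite -scaler_sumr balance scalerA mulVf ?scale1r ?gt_eqF.
Qed.

End PositiveMass.

Lemma race_correct x :
  (forall v, v \in V -> is_bernstein (Pv v)) ->
  (forall v, v \in V -> bcoef_sum (Pv v) <= C) -> in_unit_cube x ->
  \sum_(v <- V) bpoly_eval (Pv v) x *: (v - x) = 0 -> 0 < S x ->
  race_noout V Pv C x = 0 /\ \sum_(v <- V) race_out V Pv C x v *: v = x.
Proof.
move=> P_pos P_le x01 balance S_gt0.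
have S_le := race_mass_le P_pos P_le x01.
by split; [exact: race_nooutE | exact: race_out_mean].
Qed.

End BernoulliRace.

Theorem theorem2p8 (R : realType) (n : nat) (V : seq 'rV[R]_n)
    (Pv : 'rV[R]_n -> bpoly R n) (C : R) :
  is_vertex_set V ->
  (forall v, v \in V -> in_unit_cube v) ->
  (forall v, v \in V -> is_bernstein (Pv v) /\ bpoly_nonzero (Pv v)) ->
  (forall x, in_hull V x -> \sum_(v <- V) bpoly_eval (Pv v) x *: (v - x) = 0) ->
  1 <= C -> (forall v, v \in V -> bcoef_sum (Pv v) <= C) ->
  is_bernoulli_factory V (race_out V Pv C) (race_noout V Pv C) /\
  ((forall x, in_hull V x -> 0 < \sum_(v <- V) bpoly_eval (Pv v) x) ->
   is_strong_bernoulli_factory V (race_out V Pv C) (race_noout V Pv C)).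
Proof.
move=> _ V01 P_ok balance _ P_le.
have P_pos v (vV : v \in V) : is_bernstein (Pv v) by case: (P_ok v vV).
have race_ok x : in_hull V x -> 0 < \sum_(v <- V) bpoly_eval (Pv v) x ->
    race_noout V Pv C x = 0 /\ \sum_(v <- V) race_out V Pv C x v *: v = x.
  move=> xP; apply: race_correct P_pos P_le (in_hull_unit_cube V01 xP) _.
  exact: balance.
split=> [x xP x01 | S_gt0 x xP]; apply: race_ok => //; last exact: S_gt0.
apply: sumr_seq_gt0 (in_hull_neq_nil xP) _ => v vV.
by have [P_pos_v P_nz] := P_ok v vV; exact: bpoly_eval_gt0.
Qed.
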